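(* Let $G$ be a graph on vertex set $V=\{1,\ldots,n\}$ and let $G_l$ be a graph on $V$ with $E(G)\subseteq E(G_l)$. Suppose $A\in\mathcal{S}(G)$, $X\in\overline{\mathcal{S}_0}(G_l^c)$, and $AX-XA=0$. If for some pairwise distinct vertices $i,j,k$ with $k\in N_G[i]$ the pair $\{i,j\}$ is focused on $\{k\}$ with respect to $G$ and $G_l$, then $X\in\overline{\mathcal{S}_0}(G_{l+1}^c)$, where $G_{l+1}=G_l+\{j,k\}$ is obtained from $G_l$ by adding the edge $\{j,k\}$.
   Context: All graphs are finite, simple, undirected. For a graph $G$ on $\{1,\ldots,n\}$, $\mathcal{S}(G)$ is the set of real symmetric $n\times n$ matrices $A=(a_{ij})$ with $a_{ij}\neq0$ iff $\{i,j\}\in E(G)$ for $i\neq j$ (diagonal arbitrary). For a graph $H$ on $\{1,\ldots,n\}$, $\overline{\mathcal{S}_0}(H)$ is the set of real symmetric $n\times n$ matrices whose $(i,j)$ entry is zero whenever $i=j$ or $\{i,j\}\notin E(H)$; thus $X\in\overline{\mathcal{S}_0}(G_l^c)$ means $X$ is real symmetric with zero diagonal and $x_{ij}=0$ whenever $\{i,j\}\in E(G_l)$ ($G_l^c$ is the complement). $N_G[v]$ is the closed neighbourhood of $v$ in $G$ (vertices at distance at most 1 from $v$), and $N_G[v]^c$ denotes its complement in the vertex set. For a nonempty $U\subseteq V$, a pair $\{i,j\}$ is focused on $U$ with respect to $G$ and $G_l$ if $N_G[i]\cap N_{G_l}[j]^c\subseteq U$ and $N_G[j]\cap N_{G_l}[i]^c\subseteq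 U$. *)

From HB Require Import structures.
From mathcomp Require Import all_boot all_order all_algebra.
Set Implicit Arguments. Unset Strict Implicit. Unset Printing Implicit Defensive.
Import Order.TTheory GRing.Theory Num.Theory.
Local Open Scope ring_scope.

Definition simple_graph (n : nat) (G : rel 'I_n) : Prop :=
  symmetric G /\ irreflexive G.

Definition subgraph_edges (n : nat) (G H : rel 'I_n) : Prop :=
  forall i j, G i j -> H i j.

Definition compl_graph (n : nat) (G : rel 'I_n) : rel 'I_n :=
  fun i j => (i != j) && ~~ G i j.

Definition add_edge (n : nat) (G : rel 'I_n) (a b : 'I_n) : rel 'I_n :=
  fun i j => [|| G i j, (i == a) && (j == b) | (i == b) && (j == a)].

Definition cnbhd (n : nat) (G : rel 'I_n) (v : 'I_n) : {set 'I_n} :=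
  [set u | (u == v) || G v u].

Definition S_mat (R : realFieldType) (n : nat) (G : rel 'I_n)
    (A : 'M[R]_n) : Prop :=
  A^T = A /\ forall i j, i != j -> (A i j != 0) = G i j.

Definition S0bar_mat (R : realFieldType) (n : nat) (H : rel 'I_n)
    (X : 'M[R]_n) : Prop :=
  X^T = X /\ forall i j, (i == j) || ~~ H i j -> X i j = 0.

Definition focused (n : nat) (G Gl : rel 'I_n) (U : {set 'I_n}) (i j : 'I_n)
    : Prop :=
  (cnbhd G i :&: ~: cnbhd Gl j) \subset U /\
  (cnbhd G j :&: ~: cnbhd Gl i) \subset U.

(* Expand the (i, j) entry of A X - X A = 0. A term A_il X_lj survives only if
   l is in N_G[i] (pattern of A) and outside N_Gl[j] (X vanishes on E(Gl)),
   so focusing on {k} leaves A_ik X_kj alone; transposing, the other product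
   leaves A_jk X_ki, and X_ki = 0 because {i, k} is an edge of G, hence of Gl.
   Thus A_ik X_kj = 0 with A_ik <> 0. *)
From HB Require Import structures.
From mathcomp Require Import all_boot all_order all_algebra.
Set Implicit Arguments. Unset Strict Implicit. Unset Printing Implicit Defensive.
Import Order.TTheory GRing.Theory Num.Theory.
Local Open Scope ring_scope.

Lemma mulmx_entry_supported (R : pzRingType) (n : nat) (A X : 'M[R]_n)
    (i j : 'I_n) (D N U : {set 'I_n}) :
  (forall l, l \notin D -> A i l = 0) -> (forall l, l \in N -> X l j = 0) ->
  D :&: ~: N \subset U -> (A *m X) i j = \sum_(l in U) A i l * X l j.
Proof.
move=> A0 X0 sDU; rewrite mxE (bigID (fun l => l \in U)) /= addrC.
rewrite big1 ?add0r // => l lU.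
have [lD|/A0->] := boolP (l \in D); last by rewrite mul0r.
rewrite X0 ?mulr0 //; apply: contraNT lU => lN.
by apply: (subsetP sDU); rewrite !inE lD lN.
Qed.

Lemma S_mat_eq0 (R : realFieldType) (n : nat) (G : rel 'I_n) (A : 'M[R]_n)
    (p q : 'I_n) :
  S_mat G A -> q \notin cnbhd G p -> A p q = 0.
Proof.
case=> _ HA; rewrite inE negb_or => /andP[qp nGpq].
by apply/eqP; rewrite -[_ == 0]negbK HA 1?eq_sym // (negbTE nGpq).
Qed.

Lemma S0bar_matC (R : realFieldType) (n : nat) (H : rel 'I_n) (X : 'M[R]_n)
    (p q : 'I_n) :
  S0bar_mat H X -> X p q = X q p.
Proof. by case=> tX _; rewrite -[in LHS]tX mxE. Qed.

Lemma S0bar_compl_eq0 (R : realFieldType) (n : nat) (H : rel 'I_n)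
    (X : 'M[R]_n) (p q : 'I_n) :
  S0bar_mat (compl_graph H) X -> (p == q) || H p q -> X p q = 0.
Proof.
by case=> _ HX pq; apply: HX; rewrite /compl_graph negb_and !negbK orbA orbb.
Qed.

Lemma S0bar_compl_cnbhd_eq0 (R : realFieldType) (n : nat) (H : rel 'I_n)
    (X : 'M[R]_n) (p q : 'I_n) :
  S0bar_mat (compl_graph H) X -> p \in cnbhd H q -> X p q = 0.
Proof.
move=> HX; rewrite (S0bar_matC _ _ HX) inE => qHp.
by apply: (S0bar_compl_eq0 HX); rewrite eq_sym.
Qed.

Lemma S0bar_add_edge (R : realFieldType) (n : nat) (H : rel 'I_n)
    (X : 'M[R]_n) (a b : 'I_n) :
  S0bar_mat (compl_graph H) X -> X a b = 0 ->
  S0bar_mat (compl_graph (add_edge H a b)) X.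
Proof.
move=> HX Xab; split=> [|p q]; first by case: HX.
rewrite /compl_graph /add_edge negb_and !negbK orbA orbb orbA => pHq.
case/orP: pHq => [pHq | /orP[/andP[/eqP-> /eqP->] // | /andP[/eqP-> /eqP->]]].
- exact: S0bar_compl_eq0 HX pHq.
- by rewrite (S0bar_matC _ _ HX).
Qed.

Section FocusedEntry.

Variables (R : realFieldType) (n : nat) (G Gl : rel 'I_n) (A X : 'M[R]_n).
Hypotheses (HA : S_mat G A) (HX : S0bar_mat (compl_graph Gl) X).

Lemma mulmx_entry_focused (i j : 'I_n) (U : {set 'I_n}) :
  cnbhd G i :&: ~: cnbhd Gl j \subset U ->
  (A *m X) i j = \sum_(l in U) A i l * X l j.
Proof.
apply: mulmx_entry_supported => l.
- exact: S_mat_eq0.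
- exact: S0bar_compl_cnbhd_eq0.
Qed.

Lemma mulmx_sym_trmx : X *m A = (A *m X)^T.
Proof. by case: HA => tA _; case: HX => tX _; rewrite trmx_mul tA tX. Qed.

Lemma commutator_entry_focused (i j k : 'I_n) :
  focused G Gl [set k] i j ->
  (A *m X - X *m A) i j = A i k * X k j - A j k * X k i.
Proof.
case=> Fij Fji.
have -> : (A *m X - X *m A) i j = (A *m X) i j - (A *m X) j i.
  by rewrite mulmx_sym_trmx !mxE.
by rewrite (mulmx_entry_focused Fij) (mulmx_entry_focused Fji) !big_set1.
Qed.

End FocusedEntry.

Theorem lemma3p3 (R : realFieldType) (n : nat) (G Gl : rel 'I_n)
  (HG : simple_graph G) (HGl : simple_graph Gl)
  (Hsub : subgraph_edges G Gl)
  (A X : 'M[R]_n)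
  (HA : S_mat G A) (HX : S0bar_mat (compl_graph Gl) X)
  (Hcomm : A *m X - X *m A = 0)
  (i j k : 'I_n)
  (Hij : i != j) (Hik : i != k) (Hjk : j != k)
  (Hk : k \in cnbhd G i)
  (Hfoc : focused G Gl [set k] i j) :
  S0bar_mat (compl_graph (add_edge Gl j k)) X.
Proof.
have Gik : G i k by move: Hk; rewrite inE eq_sym (negbTE Hik).
have Aik : A i k != 0 by case: HA => _ ->.
have Xki : X k i = 0.
  by apply: S0bar_compl_cnbhd_eq0 HX _; rewrite inE (Hsub _ _ Gik) orbT.
have Xkj : X k j = 0.
  have := congr1 (fun M : 'M[R]_n => M i j) Hcomm.
  rewrite (commutator_entry_focused HA HX Hfoc) Xki mulr0 subr0 mxE.
  by move/eqP; rewrite mulf_eq0 (negbTE Aik) => /eqP.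
by apply: S0bar_add_edge; rewrite // (S0bar_matC _ _ HX).
Qed.
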